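(* Let $\mathfrak C$ be a complex operator ideal. The following are equivalent: (1) $\mathfrak C$ is self conjugate, i.e. $\overline{\mathfrak C}=\mathfrak C$. (2) For all Banach spaces with an $i$-operator $[X,A]$, $[Y,B]$ and every bounded linear $T:X\to Y$ with $TA=BT$: $[T\oplus T,A\oplus -A,B\oplus -B]\in\mathfrak C([X\oplus X,A\oplus -A],[Y\oplus Y,B\oplus -B])$ if and only if $[T,A,B]\in\mathfrak C([X,A],[Y,B])$.
   Context: A Banach space with an $i$-operator is a pair $[X,A]$ with $X$ a real Banach space and $A:X\to X$ bounded linear with $A^2=-I_X$ and $\|\alpha x+\beta Ax\|=\|x\|$ whenever $\alpha^2+\beta^2=1$; these correspond to complex Banach spaces. If $[X,A]$ is such a space, so is $[X,-A]$ (the complex conjugate space). A bounded linear $T:X\to Y$ with $TA=BT$ is a complex operator $[T,A,B]:[X,A]\to[Y,B]$; then also $T(-A)=(-B)T$ and $\overline{[T,A,B]}:=[T,-A,-B]$ is its complex conjugate. A complex operator ideal (Pietsch) assigns to each pair of such spaces a linear subspace of complex operators between them, containing all finite rank complex operators and stable under composition on either side with bounded complex operators. The conjugate ideal is $\overline{\mathfrak C}=\{[T,-A,-B]:[T,A,B]\in\mathfrak C\}$. $A\oplus -A$ is the $i$-operator $(x_1,x_2)\mapsto(Ax_1,-Ax_2)$ on $X\oplus X$ and $(T\oplus T)(x_1,x_2)=(Tx_1,Tx_2)$. *)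

From HB Require Import structures.
From mathcomp Require Import all_boot all_order all_algebra.
From mathcomp Require Import all_classical all_reals all_analysis.
Set Implicit Arguments. Unset Strict Implicit. Unset Printing Implicit Defensive.
Import Order.TTheory GRing.Theory Num.Theory.
Local Open Scope classical_set_scope.
Local Open Scope ring_scope.

(** MathComp-Analysis equips X * Y with the (max-)norm and a normed module
    structure; we add the (true) fact that it is complete, so that
    X (+) Y is again a Banach space. *)

HB.instance Definition _ (R : realType) (X Y : completeNormedModType R) :=
  Pointed.on (X * Y)%type.

Lemma prod_complete (R : realType) (X Y : completeNormedModType R)
  (F : set_system (X * Y)%type) : ProperFilter F -> cauchy F -> cvg F.
Proof.
move=> FF /(@cauchyP R [the pseudoMetricType R of (X * Y)%type]) Fc.
have c1 : cauchy (fst @ F).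
  apply/(@cauchyP R X) => //; rewrite /cauchy_ex => e e0; have [z Fz] := Fc e e0; exists z.1.
  suff : F [set p | ball z.1 e p.1] by [].
  by apply: filterS Fz => p; rewrite /ball /= /prod_ball => -[].
have c2 : cauchy (snd @ F).
  apply/(@cauchyP R Y) => //; rewrite /cauchy_ex => e e0; have [z Fz] := Fc e e0; exists z.2.
  suff : F [set p | ball z.2 e p.2] by [].
  by apply: filterS Fz => p; rewrite /ball /= /prod_ball => -[].
have Ha : fst @ F --> lim (fst @ F) by apply: cauchy_cvg.
have Hb : snd @ F --> lim (snd @ F) by apply: cauchy_cvg.
apply/cvg_ex; exists (lim (fst @ F), lim (snd @ F)).
have := cvg_pair Ha Hb.
suff -> : (fun x : X * Y => (x.1, x.2)) = id by move=> h; exact: h.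
by apply: funext => -[].
Qed.

HB.instance Definition _ (R : realType) (X Y : completeNormedModType R) :=
  Uniform_isComplete.Build (X * Y)%type (@prod_complete R X Y).

Section Defs.
Variable R : realType.

Definition bounded_linear (X Y : normedModType R) (f : X -> Y) : Prop :=
  (forall (a : R) (x y : X), f (a *: x + y) = a *: f x + f y) /\
  (exists M : R, forall x : X, `|f x| <= M * `|x|).

Definition i_operator (X : normedModType R) (A : X -> X) : Prop :=
  [/\ bounded_linear A,
      (forall x, A (A x) = - x) &
      (forall (a b : R) (x : X), a ^+ 2 + b ^+ 2 = 1 ->
         `|a *: x + b *: A x| = `|x|)].

Definition complex_op (X Y : normedModType R) (A : X -> X) (B : Y -> Y)
  (T : X -> Y) : Prop :=
  bounded_linear T /\ (forall x, T (A x) = B (T x)).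

Definition finite_rank (X Y : normedModType R) (T : X -> Y) : Prop :=
  exists (n : nat) (v : 'I_n -> Y),
    forall x : X, exists c : 'I_n -> R, T x = \sum_(i < n) c i *: v i.

Definition conj_iop (X : normedModType R) (A : X -> X) : X -> X :=
  fun x => - A x.

Definition dsum_iop (X : completeNormedModType R) (A : X -> X) :
  (X * X)%type -> (X * X)%type :=
  fun p => (A p.1, - A p.2).

Definition dsum_op (X Y : completeNormedModType R) (T : X -> Y) :
  (X * X)%type -> (Y * Y)%type :=
  fun p => (T p.1, T p.2).

(** A candidate complex operator ideal: for every pair of Banach spaces
    with i-operators [X,A], [Y,B], the set of T with C X Y A B T is
    C([X,A],[Y,B]) (only meaningful when A, B are i-operators). *)
Definition cideal_family : Type :=
  forall (X Y : completeNormedModType R), (X -> X) -> (Y -> Y) -> (X -> Y) -> Prop.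

Definition is_complex_operator_ideal (C : cideal_family) : Prop :=
  forall (X Y : completeNormedModType R) (A : X -> X) (B : Y -> Y),
    i_operator A -> i_operator B ->
    [/\ (forall T, C X Y A B T -> complex_op A B T),
        (forall T, complex_op A B T -> finite_rank T -> C X Y A B T),
        (forall S T, C X Y A B S -> C X Y A B T ->
                     C X Y A B (fun x => S x + T x)),
        (forall (a b : R) T, C X Y A B T ->
                     C X Y A B (fun x => a *: T x + b *: B (T x))) &
        (forall (X0 Y0 : completeNormedModType R) (A0 : X0 -> X0) (B0 : Y0 -> Y0),
           i_operator A0 -> i_operator B0 ->
           forall (S : X0 -> X) (T : X -> Y) (U : Y -> Y0),
             complex_op A0 A S -> C X Y A B T -> complex_op B B0 U ->
             C X0 Y0 A0 B0 (fun x => U (T (S x))))].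

Definition conj_ideal (C : cideal_family) : cideal_family :=
  fun X Y A B T => C X Y (conj_iop A) (conj_iop B) T.

Definition self_conjugate (C : cideal_family) : Prop :=
  forall (X Y : completeNormedModType R) (A : X -> X) (B : Y -> Y),
    i_operator A -> i_operator B ->
    forall T : X -> Y, @conj_ideal C X Y A B T <-> C X Y A B T.

End Defs.

From HB Require Import structures.
From mathcomp Require Import all_boot all_order all_algebra.
From mathcomp Require Import all_classical all_reals all_analysis.
Import Order.TTheory GRing.Theory Num.Theory.
Local Open Scope ring_scope.
Set Implicit Arguments. Unset Strict Implicit.

(** With the injections [i1 x = (x, 0)], [i2 x = (0, x)] and the projections
    [p1], [p2], one has [T (+) T = i1 T p1 + i2 T p2], where the second
    summand factors through [T : [X,-A] -> [Y,-B]]; conversely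
    [T = p1 (T (+) T) i1] as an operator [[X,A] -> [Y,B]] and
    [T = p2 (T (+) T) i2] as an operator [[X,-A] -> [Y,-B]].  Hence an ideal
    contains [T (+) T] iff it contains both [T] and its conjugate, so (2)
    says that the ideal is contained in its conjugate; applied to the
    conjugate spaces, this also gives the reverse inclusion. *)

Section ComplexOperators.
Variable R : realType.

Lemma bounded_linear0 (X Y : normedModType R) (f : X -> Y) :
  bounded_linear f -> f 0 = 0.
Proof.
case=> lin _; have := lin (-1) 0 0.
by rewrite scaler0 addr0 scaleN1r => ->; rewrite addNr.
Qed.

Lemma bounded_linearN (X Y : normedModType R) (f : X -> Y) x :
  bounded_linear f -> f (- x) = - f x.
Proof.
by move=> hf; have := hf.1 (-1) x 0; rewrite (bounded_linear0 hf) !addr0 !scaleN1r.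
Qed.

Lemma conj_iopK (X : normedModType R) (A : X -> X) :
  conj_iop (conj_iop A) = A.
Proof. by apply: funext => x; rewrite /conj_iop opprK. Qed.

Lemma i_operator_conj (X : normedModType R) (A : X -> X) :
  i_operator A -> i_operator (conj_iop A).
Proof.
case=> blA hAA hnorm; have [linA [M hM]] := blA; split.
- split; first by move=> a x y; rewrite /conj_iop linA opprD -scalerN.
  by exists M => x; rewrite /conj_iop normrN.
- by move=> x; rewrite /conj_iop (bounded_linearN _ blA) opprK hAA.
- by move=> a b x h; rewrite /conj_iop scalerN -scaleNr hnorm // sqrrN.
Qed.

Lemma i_operator_dsum (X : completeNormedModType R) (A : X -> X) :
  i_operator A -> @i_operator R (X * X)%type (dsum_iop A).
Proof.
case=> blA hAA hnorm; have [linA [M hM]] := blA; split.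
- split; first by move=> a [x1 x2] [y1 y2]; rewrite /dsum_iop /= !linA opprD -scalerN.
  exists `|M| => -[x1 x2]; rewrite /dsum_iop !prod_normE /= normrN ge_max.
  have hM' x : `|A x| <= `|M| * `|x|.
    by apply: le_trans (hM x) _; rewrite ler_wpM2r // ler_norm.
  by rewrite !(le_trans (hM' _)) // ler_wpM2l // le_max lexx ?orbT.
- by move=> [x1 x2]; rewrite /dsum_iop /= (bounded_linearN _ blA) opprK !hAA.
- move=> a b [x1 x2] h; rewrite /dsum_iop !prod_normE /=.
  by rewrite hnorm // scalerN -scaleNr hnorm // sqrrN.
Qed.

Lemma pair_addE (X Y : normedModType R) (p q : (X * Y)%type) :
  p + q = (p.1 + q.1, p.2 + q.2).
Proof. by case: p; case: q. Qed.

Lemma pair_scaleE (X Y : normedModType R) (a : R) (p : (X * Y)%type) :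
  a *: p = (a *: p.1, a *: p.2).
Proof. by case: p. Qed.

Lemma complex_op_inl (X : completeNormedModType R) (A : X -> X) :
  bounded_linear A ->
  @complex_op R X (X * X)%type A (dsum_iop A) (fun x => (x, 0)).
Proof.
move=> hA; split; last by move=> x; rewrite /dsum_iop /= (bounded_linear0 hA) oppr0.
split; first by move=> a x y; rewrite pair_addE pair_scaleE /= scaler0 addr0.
by exists 1 => x; rewrite mul1r prod_normE /= normr0 (max_l (normr_ge0 _)).
Qed.

Lemma complex_op_inr (X : completeNormedModType R) (A : X -> X) :
  bounded_linear A ->
  @complex_op R X (X * X)%type (conj_iop A) (dsum_iop A) (fun x => (0, x)).
Proof.
move=> hA; split; last by move=> x; rewrite /dsum_iop /= (bounded_linear0 hA).
split; first by move=> a x y; rewrite pair_addE pair_scaleE /= scaler0 addr0.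
by exists 1 => x; rewrite mul1r prod_normE /= normr0 (max_r (normr_ge0 _)).
Qed.

Lemma complex_op_fst (X : completeNormedModType R) (A : X -> X) :
  @complex_op R (X * X)%type X (dsum_iop A) A fst.
Proof.
split=> //; split=> //.
by exists 1 => -[x1 x2]; rewrite mul1r prod_normE /= le_max lexx.
Qed.

Lemma complex_op_snd (X : completeNormedModType R) (A : X -> X) :
  @complex_op R (X * X)%type X (dsum_iop A) (conj_iop A) snd.
Proof.
split=> //; split=> //.
by exists 1 => -[x1 x2]; rewrite mul1r prod_normE /= le_max lexx orbT.
Qed.

End ComplexOperators.

Section OperatorIdeal.
Variable R : realType.
Variable C : cideal_family R.
Arguments C : clear implicits.
Hypothesis ideal_C : is_complex_operator_ideal C.

Lemma conj_idealK (X Y : completeNormedModType R) (A : X -> X) (B : Y -> Y) T :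
  conj_ideal C (conj_iop A) (conj_iop B) T <-> C X Y A B T.
Proof. by rewrite /conj_ideal !conj_iopK. Qed.

Lemma dsum_op_idealE (X Y : completeNormedModType R) (A : X -> X) (B : Y -> Y)
    (T : X -> Y) : i_operator A -> i_operator B ->
  C (X * X)%type (Y * Y)%type (dsum_iop A) (dsum_iop B) (dsum_op T) <->
  C X Y A B T /\ conj_ideal C A B T.
Proof.
move=> iA iB; have iA' := i_operator_conj iA; have iB' := i_operator_conj iB.
have [blA _ _] := iA; have [blB _ _] := iB.
have [_ _ addC _ compC_dsum] := ideal_C (i_operator_dsum iA) (i_operator_dsum iB).
split=> [CTT | [CT CT']].
  split.
  - exact: compC_dsum _ _ _ _ iA iB _ _ _ (complex_op_inl blA) CTT (complex_op_fst B).
  - exact: compC_dsum _ _ _ _ iA' iB' _ _ _ (complex_op_inr blA) CTT (complex_op_snd B).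
have [_ _ _ _ compC] := ideal_C iA iB.
have [_ _ _ _ compC'] := ideal_C iA' iB'.
have C_inl := compC _ _ _ _ (i_operator_dsum iA) (i_operator_dsum iB) _ _ _
  (complex_op_fst A) CT (complex_op_inl blB).
have C_inr := compC' _ _ _ _ (i_operator_dsum iA) (i_operator_dsum iB) _ _ _
  (complex_op_snd A) CT' (complex_op_inr blB).
have -> : dsum_op T = fun x : X * X => (T x.1, 0) + (0, T x.2).
  by apply: funext => -[x1 x2]; rewrite /dsum_op pair_addE /= addr0 add0r.
exact: addC C_inl C_inr.
Qed.

Definition dsum_invariant : Prop :=
  forall (X Y : completeNormedModType R) (A : X -> X) (B : Y -> Y),
    i_operator A -> i_operator B ->
    forall T : X -> Y, complex_op A B T ->
      (C (X * X)%type (Y * Y)%type (dsum_iop A) (dsum_iop B) (dsum_op T)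
       <-> C X Y A B T).

Lemma self_conjugate_dsum_invariant : self_conjugate C -> dsum_invariant.
Proof.
move=> selfC X Y A B iA iB T _; split=> [/(dsum_op_idealE T iA iB)[] // | CT].
by apply/(dsum_op_idealE T iA iB); split=> //; apply/(selfC _ _ _ _ iA iB).
Qed.

Lemma dsum_invariant_conj_ideal : dsum_invariant ->
  forall (X Y : completeNormedModType R) (A : X -> X) (B : Y -> Y) T,
  i_operator A -> i_operator B -> C X Y A B T -> conj_ideal C A B T.
Proof.
move=> dsumC X Y A B T iA iB CT; have [complexC _ _ _ _] := ideal_C iA iB.
by have [] := (dsum_op_idealE T iA iB).1 ((dsumC _ _ _ _ iA iB T (complexC _ CT)).2 CT).
Qed.

Lemma dsum_invariant_self_conjugate : dsum_invariant -> self_conjugate C.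
Proof.
move=> dsumC X Y A B iA iB T; split; last exact: dsum_invariant_conj_ideal.
move=> CT'; apply: (conj_idealK A B T).1.
exact: dsum_invariant_conj_ideal (i_operator_conj iA) (i_operator_conj iB) CT'.
Qed.

End OperatorIdeal.

Theorem proposition5 (R : realType) (C : cideal_family R) :
  is_complex_operator_ideal C ->
  (self_conjugate C <->
   (forall (X Y : completeNormedModType R) (A : X -> X) (B : Y -> Y),
      i_operator A -> i_operator B ->
      forall T : X -> Y, complex_op A B T ->
        (C (X * X)%type (Y * Y)%type (dsum_iop A) (dsum_iop B) (dsum_op T)
         <-> C X Y A B T))).
Proof.
move=> ideal_C; split; first exact: self_conjugate_dsum_invariant.
exact: dsum_invariant_self_conjugate.
Qed.
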